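(* Assume (A1), (A2) and (A3) below. Let $r\in\mathcal R_\epsilon$ and let $p$ be the fixed path returned by the planner. Then the point $(\bar x_r,1)$ is an asymptotically stable equilibrium point of the closed-loop PathFG+MPC system $$s_{k+1}=g\big(\tilde\xi_N^*(x_k,s_k)\big),\qquad x_{k+1}=f\big(x_k,\tilde\kappa(x_k,s_k)\big),$$ with region of attraction $(\mathcal D_x(r)\times[0,1])\cap\tilde\Gamma$.
   Context: System: $x_{k+1}=f(x_k,u_k)$, $x_k\in\mathbb R^{n_x}$, $u_k\in\mathbb R^{n_u}$, $k\in\mathbb N=\{0,1,2,\dots\}$, with constraint sets $\mathcal X=\{x:h_x(x)\le0\}$, $\mathcal U=\{u:h_u(u)\le0\}$, where $h_x:\mathbb R^{n_x}\to\mathbb R$, $h_u:\mathbb R^{n_u}\to\mathbb R$. (A1) $f$ is locally Lipschitz, $h_x,h_u$ are continuous, and there are a set $\mathcal R\subseteq\mathbb R^{n_r}$ and continuous maps $r\mapsto\bar x_r\in\mathcal X$, $r\mapsto\bar u_r\in\mathcal U$ on $\mathcal R$ with $\bar x_r=f(\bar x_r,\bar u_r)$ for all $r\in\mathcal R$. For a fixed $\epsilon>0$, $\mathcal R_\epsilon=\{r\in\mathcal R: h_x(\bar x_r)\le-\epsilon,\ h_u(\bar u_r)\le-\epsilon\}$. MPC: fix a horizon $N\in\mathbb N_{>0}$, a stage cost $\ell:\mathcal X\times\mathcal U\times\mathcal R_\epsilon\to\mathbb R_{\ge0}$, a terminal set $\mathcal T\subseteq\mathcal X\times\mathcal R$ and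 a terminal cost $V:\mathcal T\to\mathbb R_{\ge0}$. For $(x,r)$ the optimal control problem (OCP) is to minimize $V(\xi_N,r)+\sum_{i=0}^{N-1}\ell(\xi_i,\mu_i,r)$ over $\xi=(\xi_0,\dots,\xi_N)$, $\mu=(\mu_0,\dots,\mu_{N-1})$ subject to $\xi_0=x$, $\xi_{i+1}=f(\xi_i,\mu_i)$, $\xi_i\in\mathcal X$, $\mu_i\in\mathcal U$ for $i=0,\dots,N-1$, and $(\xi_N,r)\in\mathcal T$. The feasible set is $\Gamma=\{(x,r)\in\mathcal X\times\mathcal R_\epsilon:$ the OCP constraints admit a solution$\}$. For $(x,r)\in\Gamma$, $\zeta^*(x,r)=(\xi_0^*,\dots,\xi_N^*,\mu_0^*,\dots,\mu_{N-1}^* )$ denotes the minimizer (treated as a function), $\xi_N^*(x,r)$ its final state, $J(x,r)$ the optimal cost, and the MPC law is $\kappa(x,r)=\mu_0^*(x,r)$. (A2) (a) $\ell$ is uniformly continuous, $\ell(\bar x_r,\bar u_r,r)=0$, and there is a class-$\mathcal K_\infty$ function $\gamma$ with $\ell(x,u,r)\ge\gamma(\|x-\bar x_r\|)$ for all $(x,r)\in\Gamma$, $u\in\mathcal U$. (b) $V$ is uniformly continuous, $V(\bar x_r,r)=0$, $V\ge0$ on $\mathcal T$, and there is a terminal law $\kappa_T:\mathcal T\to\mathcal U$ with $V(f(x,\kappa_T(x,r)),r)-V(x,r)\le-\ell(x,\kappa_T(x,r),r)$ for all $(x,r)\in\mathcal T$. (c) For all $(x,r)\in\mathcal T$: $(f(x,\kappa_T(x,r)),r)\in\mathcal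 T$, $x\in\mathcal X$ and $\kappa_T(x,r)\in\mathcal U$. (d) $(\bar x_r,r)\in\operatorname{int}\mathcal T$ for all $r\in\mathcal R_\epsilon$. (e) $\zeta^*$ is Lipschitz continuous. Paths: for $x_0\in\mathbb R^{n_x}$ and $r\in\mathcal R_\epsilon$, a feasible path is $\mathcal P(x_0,r)=\{p(s):s\in[0,1]\}$ with $p:[0,1]\to\mathcal R_\epsilon$ continuous, $(x_0,p(0))\in\Gamma$ and $p(1)=r$. $\mathcal D=\{(x_0,r): r\in\mathcal R_\epsilon$, a feasible path $\mathcal P(x_0,r)$ exists$\}$ and $\mathcal D_x(r)=\{x_0:(x_0,r)\in\mathcal D\}$. (A3) Given $(x_0,r)\in\mathcal D$, the path planner returns a feasible path $\mathcal P(x_0,r)$. With the path $p$ fixed: $\tilde x_s=\bar x_{p(s)}$, $\tilde{\mathcal T}=\{(x,s):(x,p(s))\in\mathcal T\}$, $\tilde\Gamma=\{(x,s):(x,p(s))\in\Gamma\}$, $\tilde\xi_N^*(x,s)=\xi_N^*(x,p(s))$, $\tilde\kappa(x,s)=\kappa(x,p(s))$, and the Path Feasibility Governor map is $g(\xi)=\max\{s\in[0,1]:(\xi,s)\in\tilde{\mathcal T}\}$. Asymptotic stability with a given region of attraction means Lyapunov stability of the equilibrium together with convergence to it of every trajectory starting in that region. *)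

(* R : realType, vectors are row vectors 'rV[R]_n
   with the library norm (max norm; all norms on R^n are equivalent). *)
From HB Require Import structures.
From mathcomp Require Import all_boot all_order all_algebra.
From mathcomp Require Import all_classical all_reals all_analysis.
Set Implicit Arguments. Unset Strict Implicit. Unset Printing Implicit Defensive.
Import Order.TTheory GRing.Theory Num.Theory.
Import numFieldNormedType.Exports.
Local Open Scope ring_scope.
Local Open Scope classical_set_scope.

Definition Kinf {R : realType} (gamma : R -> R) : Prop :=
  gamma 0 = 0 /\
  {within [set t : R | 0 <= t], continuous gamma} /\
  (forall a b : R, 0 <= a -> a < b -> gamma a < gamma b) /\
  (forall M : R, exists t : R, 0 <= t /\ M <= gamma t).

Definition loc_lipschitz2 {R : realType} {n m k : nat}
  (f : 'rV[R]_n -> 'rV[R]_m -> 'rV[R]_k) : Prop :=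
  forall (x0 : 'rV[R]_n) (u0 : 'rV[R]_m), exists2 d : R, 0 < d &
    exists L : R, forall x1 x2 u1 u2,
      `|x1 - x0| < d -> `|u1 - u0| < d -> `|x2 - x0| < d -> `|u2 - u0| < d ->
      `|f x1 u1 - f x2 u2| <= L * (`|x1 - x2| + `|u1 - u2|).

Definition unif_cont3 {R : realType} {n m k : nat}
  (l : 'rV[R]_n -> 'rV[R]_m -> 'rV[R]_k -> R)
  (Dom : 'rV[R]_n -> 'rV[R]_m -> 'rV[R]_k -> Prop) : Prop :=
  forall e : R, 0 < e -> exists2 d : R, 0 < d &
    forall x1 u1 r1 x2 u2 r2, Dom x1 u1 r1 -> Dom x2 u2 r2 ->
      `|x1 - x2| < d -> `|u1 - u2| < d -> `|r1 - r2| < d ->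
      `|l x1 u1 r1 - l x2 u2 r2| < e.

Definition unif_cont2 {R : realType} {n k : nat}
  (V : 'rV[R]_n -> 'rV[R]_k -> R) (Dom : set ('rV[R]_n * 'rV[R]_k)) : Prop :=
  forall e : R, 0 < e -> exists2 d : R, 0 < d &
    forall x1 r1 x2 r2, Dom (x1, r1) -> Dom (x2, r2) ->
      `|x1 - x2| < d -> `|r1 - r2| < d -> `|V x1 r1 - V x2 r2| < e.

Definition Reps {R : realType} {nx nu nr : nat} (Rset : set 'rV[R]_nr)
  (xbar : 'rV[R]_nr -> 'rV[R]_nx) (ubar : 'rV[R]_nr -> 'rV[R]_nu)
  (hx : 'rV[R]_nx -> R) (hu : 'rV[R]_nu -> R) (eps : R) : set 'rV[R]_nr :=
  [set r | Rset r /\ hx (xbar r) <= - eps /\ hu (ubar r) <= - eps].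

(* constraints of the OCP for (x, r); xi and mu are indexed by nat,
   only the indices 0..N (resp. 0..N-1) matter *)
Definition ocp_feasible {R : realType} {nx nu nr : nat}
  (f : 'rV[R]_nx -> 'rV[R]_nu -> 'rV[R]_nx)
  (hx : 'rV[R]_nx -> R) (hu : 'rV[R]_nu -> R)
  (T : set ('rV[R]_nx * 'rV[R]_nr)) (N : nat)
  (x : 'rV[R]_nx) (r : 'rV[R]_nr)
  (xi : nat -> 'rV[R]_nx) (mu : nat -> 'rV[R]_nu) : Prop :=
  xi 0%N = x /\
  (forall i : nat, (i < N)%N ->
     xi i.+1 = f (xi i) (mu i) /\ hx (xi i) <= 0 /\ hu (mu i) <= 0) /\
  T (xi N, r).

Definition ocp_cost {R : realType} {nx nu nr : nat}
  (ell : 'rV[R]_nx -> 'rV[R]_nu -> 'rV[R]_nr -> R)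
  (V : 'rV[R]_nx -> 'rV[R]_nr -> R) (N : nat) (r : 'rV[R]_nr)
  (xi : nat -> 'rV[R]_nx) (mu : nat -> 'rV[R]_nu) : R :=
  V (xi N) r + \sum_(i < N) ell (xi i) (mu i) r.

Definition Gamma {R : realType} {nx nu nr : nat}
  (f : 'rV[R]_nx -> 'rV[R]_nu -> 'rV[R]_nx)
  (hx : 'rV[R]_nx -> R) (hu : 'rV[R]_nu -> R)
  (T : set ('rV[R]_nx * 'rV[R]_nr)) (Re : set 'rV[R]_nr) (N : nat)
  : set ('rV[R]_nx * 'rV[R]_nr) :=
  [set z | hx z.1 <= 0 /\ Re z.2 /\
           exists xi mu, ocp_feasible f hx hu T N z.1 z.2 xi mu].

Definition feasible_path {R : realType} {nx nr : nat}
  (Gam : set ('rV[R]_nx * 'rV[R]_nr)) (Re : set 'rV[R]_nr)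
  (x0 : 'rV[R]_nx) (r : 'rV[R]_nr) (p : R -> 'rV[R]_nr) : Prop :=
  {within [set s : R | 0 <= s <= 1], continuous p} /\
  (forall s : R, 0 <= s <= 1 -> Re (p s)) /\
  Gam (x0, p 0) /\ p 1 = r.

Definition Dset {R : realType} {nx nr : nat}
  (Gam : set ('rV[R]_nx * 'rV[R]_nr)) (Re : set 'rV[R]_nr)
  : set ('rV[R]_nx * 'rV[R]_nr) :=
  [set z | Re z.2 /\ exists p, feasible_path Gam Re z.1 z.2 p].

(* closed-loop PathFG + MPC map on (x, s):
   s+ = g (xi_N^*(x, p s)),  x+ = f x (mu_0^*(x, p s)) *)
Definition cl_step {R : realType} {nx nu nr : nat}
  (f : 'rV[R]_nx -> 'rV[R]_nu -> 'rV[R]_nx)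
  (xis : 'rV[R]_nx -> 'rV[R]_nr -> nat -> 'rV[R]_nx)
  (mus : 'rV[R]_nx -> 'rV[R]_nr -> nat -> 'rV[R]_nu)
  (N : nat) (p : R -> 'rV[R]_nr) (g : 'rV[R]_nx -> R)
  (z : 'rV[R]_nx * R) : 'rV[R]_nx * R :=
  (f z.1 (mus z.1 (p z.2) 0%N), g (xis z.1 (p z.2) N)).

Definition asympt_stable_ROA {R : realType} {nx : nat}
  (F : 'rV[R]_nx * R -> 'rV[R]_nx * R) (xe : 'rV[R]_nx) (se : R)
  (A : set ('rV[R]_nx * R)) : Prop :=
  F (xe, se) = (xe, se) /\
  (forall e : R, 0 < e -> exists2 d : R, 0 < d &
     forall z, A z -> `|z.1 - xe| < d -> `|z.2 - se| < d ->
       forall k : nat, `|(iter k F z).1 - xe| < e /\ `|(iter k F z).2 - se| < e) /\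
  (forall z, A z ->
     ((fun k : nat => (iter k F z).1) @ \oo --> xe) /\
     ((fun k : nat => (iter k F z).2) @ \oo --> se)).

(* While the governor parameter s_k stays below 1 it is nondecreasing, hence converges to some
   s*.  Near s* the reference p s_k moves little, so by the usual shifted-candidate argument the
   MPC value J(x_k, p s_k) drops by gamma |x_k - xbar (p s_k)| up to an arbitrarily small error.
   On the other hand, if x_k comes close to xbar (p s_k), the Lipschitz minimizer puts its
   terminal state in the interior ball of T around the equilibrium at s*, and the governor jumps
   past s*.  So J would decrease by a fixed amount forever, which is absurd: s_k reaches 1 in
   finitely many steps.  From then on the reference is r and J(., r) is a Lyapunov function,
   bounded below by gamma |x - xbar r| and small near xbar r; this gives convergence and, since
   one step from near (xbar r, 1) already sets s to 1, Lyapunov stability. *)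

From HB Require Import structures.
From mathcomp Require Import all_boot all_order all_algebra.
From mathcomp Require Import all_classical all_reals all_analysis.
From mathcomp Require Import lra.
Import Order.TTheory GRing.Theory Num.Theory.
Import numFieldNormedType.Exports.
Set Implicit Arguments. Unset Strict Implicit.
Local Open Scope ring_scope.
Local Open Scope classical_set_scope.

Lemma no_uniform_descent (R : realType) (a : nat -> R) (K : nat) (c : R) :
  0 < c -> (forall k, 0 <= a k) -> ~ (forall k, (K <= k)%N -> a k.+1 <= a k - c).
Proof.
move=> c0 a0 descent.
have drop n : a (K + n)%N <= a K - n%:R * c.
  elim: n => [|n IH]; first by rewrite addn0 mul0r subr0.
  rewrite addnS; apply: le_trans (descent _ (leq_addr _ _)) _.
  rewrite -nat1r mulrDl mul1r; lra.
have := archi_boundP (divr_ge0 (a0 K) (ltW c0)).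
set n := Num.Def.archi_bound _; rewrite ltr_pdivrMr // => Kn.
by have := drop n; have := a0 (K + n)%N; lra.
Qed.

Lemma within_continuous_ball (R : realType) (U V : normedModType R) (A : set U) (h : U -> V) :
  {within A, continuous h} -> forall x, A x -> forall e : R, 0 < e ->
  exists2 d : R, 0 < d & forall y, A y -> `|x - y| < d -> `|h x - h y| < e.
Proof.
rewrite continuous_subspace_in => hc x Ax e e0.
have /hc /cvgrPdist_lt /(_ e e0) : x \in A by rewrite inE.
move=> near_x; have : \forall y \near within A (nbhs x), `|h x - h y| < e.
  by rewrite (nbhs_subspace_in Ax).
rewrite near_withinE => /nbhs_ballP [d d0 hd].
by exists d => // y Ay xy; apply: hd => //; rewrite -ball_normE.
Qed.

Lemma interior_prod_ball (R : realType) (U V : normedModType R) (T : set (U * V)) a b :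
  interior T (a, b) -> exists2 r : R, 0 < r &
    forall y z, `|y - a| < r -> `|z - b| < r -> T (y, z).
Proof.
move=> /nbhs_ballP [d d0 hd]; exists d => // y z ya zb.
by apply: hd; split; rewrite /= -ball_normE /ball_ /= distrC.
Qed.

Lemma ler_sum_term (R : numDomainType) n (F : 'I_n -> R) i :
  (forall j, 0 <= F j) -> F i <= \sum_j F j.
Proof. by move=> F0; rewrite (bigD1 i) //= lerDl sumr_ge0. Qed.

Section ClassKinf.
Variables (R : realType) (gamma : R -> R).
Hypothesis gammaK : Kinf gamma.

Lemma Kinf_le a b : 0 <= a -> a <= b -> gamma a <= gamma b.
Proof.
have [_ [_ [inc _]]] := gammaK.
by move=> a0; rewrite le_eqVlt => /predU1P [-> // | ab]; exact/ltW/inc.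
Qed.

Lemma Kinf_gt0 a : 0 < a -> 0 < gamma a.
Proof. by have [g0 [_ [inc _]]] := gammaK; move=> a0; rewrite -g0 inc. Qed.

Lemma Kinf_ge0 a : 0 <= a -> 0 <= gamma a.
Proof. by have [g0 _] := gammaK; move=> a0; rewrite -g0 Kinf_le. Qed.

Lemma Kinf_ltr a b : 0 <= b -> gamma a < gamma b -> a < b.
Proof. by move=> b0; apply: contraTT; rewrite -!leNgt; exact: Kinf_le. Qed.

Lemma Kinf_eq0 a : 0 <= a -> gamma a <= 0 -> a = 0.
Proof.
move=> a0 ga; apply/eqP; rewrite eq_le a0 andbT leNgt; apply/negP => /Kinf_gt0.
by rewrite ltNge ga.
Qed.

End ClassKinf.

Lemma asympt_stable_ROA_sub (R : realType) nx (F : 'rV[R]_nx * R -> 'rV[R]_nx * R)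
    xe se (A B : set ('rV[R]_nx * R)) :
  A `<=` B -> asympt_stable_ROA F xe se B -> asympt_stable_ROA F xe se A.
Proof.
move=> AB [eq [stable attr]]; split=> //; split=> [e e0|z Az]; last exact/attr/AB.
by have [d d0 hd] := stable e e0; exists d => // z /AB; exact: hd.
Qed.

Section MPCValueFunction.
Variables (R : realType) (nx nu nr n : nat).
Variables (f : 'rV[R]_nx -> 'rV[R]_nu -> 'rV[R]_nx) (hx : 'rV[R]_nx -> R) (hu : 'rV[R]_nu -> R).
Variables (Rset Re : set 'rV[R]_nr).
Variables (xbar : 'rV[R]_nr -> 'rV[R]_nx) (ubar : 'rV[R]_nr -> 'rV[R]_nu).
Variables (ell : 'rV[R]_nx -> 'rV[R]_nu -> 'rV[R]_nr -> R) (V : 'rV[R]_nx -> 'rV[R]_nr -> R).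
Variables (T : set ('rV[R]_nx * 'rV[R]_nr)) (kappaT : 'rV[R]_nx -> 'rV[R]_nr -> 'rV[R]_nu).
Variables (gamma : R -> R).
Variables (xis : 'rV[R]_nx -> 'rV[R]_nr -> nat -> 'rV[R]_nx).
Variables (mus : 'rV[R]_nx -> 'rV[R]_nr -> nat -> 'rV[R]_nu).

Local Notation N := n.+1.
Local Notation feasible := (ocp_feasible f hx hu T N).
Local Notation Gam := (Gamma f hx hu T Re N).
Local Notation J x r := (ocp_cost ell V N r (xis x r) (mus x r)).

Hypothesis Re_sub : Re `<=` Rset.
Hypothesis xbar_fixed : forall r, Rset r -> xbar r = f (xbar r) (ubar r).
Hypothesis xbar_adm : forall r, Rset r -> hx (xbar r) <= 0.
Hypothesis ubar_adm : forall r, Rset r -> hu (ubar r) <= 0.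
Hypothesis ell_ge0 : forall x u r, hx x <= 0 -> hu u <= 0 -> Re r -> 0 <= ell x u r.
Hypothesis minimizer : forall x r, Gam (x, r) ->
  feasible x r (xis x r) (mus x r) /\
  forall xi mu, feasible x r xi mu -> J x r <= ocp_cost ell V N r xi mu.
Hypothesis ell_uc : unif_cont3 ell (fun x u r => hx x <= 0 /\ hu u <= 0 /\ Re r).
Hypothesis ell_eq0 : forall r, Re r -> ell (xbar r) (ubar r) r = 0.
Hypothesis gammaK : Kinf gamma.
Hypothesis ell_lb : forall x r u, Gam (x, r) -> hu u <= 0 -> gamma `|x - xbar r| <= ell x u r.
Hypothesis V_uc : unif_cont2 V T.
Hypothesis V_eq0 : forall r, Re r -> V (xbar r) r = 0.
Hypothesis V_ge0 : forall x r, T (x, r) -> 0 <= V x r.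
Hypothesis V_dec : forall x r, T (x, r) ->
  V (f x (kappaT x r)) r - V x r <= - ell x (kappaT x r) r.
Hypothesis T_inv : forall x r, T (x, r) ->
  T (f x (kappaT x r), r) /\ hx x <= 0 /\ hu (kappaT x r) <= 0.
Hypothesis T_int : forall r, Re r -> interior T (xbar r, r).
Hypothesis minimizer_lip : exists L : R, forall x1 r1 x2 r2, Gam (x1, r1) -> Gam (x2, r2) ->
  \sum_(i < N.+1) `|xis x1 r1 i - xis x2 r2 i| + \sum_(i < N) `|mus x1 r1 i - mus x2 r2 i|
    <= L * (`|x1 - x2| + `|r1 - r2|).

(* Suffixes of this extension are the shifted candidates of recursive feasibility. *)
Definition ext_state (xi : nat -> 'rV[R]_nx) (rt : 'rV[R]_nr) (i : nat) : 'rV[R]_nx :=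
  if (i <= N)%N then xi i else iter (i - N) (fun y => f y (kappaT y rt)) (xi N).

Definition ext_input (xi : nat -> 'rV[R]_nx) (mu : nat -> 'rV[R]_nu) (rt : 'rV[R]_nr)
    (i : nat) : 'rV[R]_nu :=
  if (i < N)%N then mu i else kappaT (ext_state xi rt i) rt.

Lemma ext_state_le xi rt i : (i <= N)%N -> ext_state xi rt i = xi i.
Proof. by rewrite /ext_state => ->. Qed.

Lemma ext_state_succ xi rt i : (N <= i)%N ->
  ext_state xi rt i.+1 = f (ext_state xi rt i) (kappaT (ext_state xi rt i) rt).
Proof.
move=> Ni; rewrite /ext_state ltnNge Ni subSn //=; case: leqP => // iN.
have -> : i = N by apply/eqP; rewrite eqn_leq iN.
by rewrite subnn.

Qed.

Lemma ext_state_terminal xi rt i : T (xi N, rt) -> (N <= i)%N -> T (ext_state xi rt i, rt).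
Proof.
move=> TN /subnKC <-; elim: (i - N)%N => [|j IH]; first by rewrite addn0 ext_state_le.
by rewrite addnS ext_state_succ ?leq_addr //; exact: (T_inv IH).1.
Qed.

Lemma ext_step x r rt xi mu i : feasible x r xi mu -> T (xi N, rt) ->
  [/\ ext_state xi rt i.+1 = f (ext_state xi rt i) (ext_input xi mu rt i),
      hx (ext_state xi rt i) <= 0 & hu (ext_input xi mu rt i) <= 0].
Proof.
move=> [_ [dyn _]] TN; rewrite /ext_input; case: ltnP => iN.
- rewrite (ext_state_le xi rt iN) (ext_state_le xi rt (ltnW iN)).
  by have [? [? ?]] := dyn i iN.
- by rewrite ext_state_succ //; have [_ [? ?]] := T_inv (ext_state_terminal TN iN).
Qed.

Lemma ext_suffix_feasible x r rt xi mu j : feasible x r xi mu -> T (xi N, rt) -> Re rt ->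
  Gam (ext_state xi rt j, rt) /\
  feasible (ext_state xi rt j) rt (fun i => ext_state xi rt (j + i))
           (fun i => ext_input xi mu rt (j + i)).
Proof.
move=> fe TN Rrt.
have fej : feasible (ext_state xi rt j) rt (fun i => ext_state xi rt (j + i))
                    (fun i => ext_input xi mu rt (j + i)).
  split; first by rewrite addn0.
  split=> [i _|]; last by apply: ext_state_terminal; rewrite ?leq_addl.
  by have [? ? ?] := ext_step (j + i) fe TN; rewrite addnS.
have [_ hxj _] := ext_step j fe TN.
by split=> //; split=> //; split=> //; do 2 eexists; exact: fej.
Qed.

Lemma feasible_state_Gamma x r xi mu j : feasible x r xi mu -> Re r -> (j <= N)%N ->
  Gam (xi j, r).
Proof.
move=> fe Rr jN; have [_ [_ TN]] := fe.
by have [+ _] := ext_suffix_feasible j fe TN Rr; rewrite ext_state_le.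
Qed.

Lemma Gamma_shift x r rt : Gam (x, r) -> T (xis x r N, rt) -> Re rt -> Gam (xis x r 1%N, rt).
Proof.
move=> Gx TN Rrt; have [fe _] := minimizer Gx.
by have [+ _] := ext_suffix_feasible 1 fe TN Rrt; rewrite ext_state_le.
Qed.

Lemma feasible_stage_ge0 x r xi mu i : feasible x r xi mu -> Re r -> (i < N)%N ->
  0 <= ell (xi i) (mu i) r.
Proof. by move=> [_ [dyn _]] Rr iN; have [_ [? ?]] := dyn i iN; exact: ell_ge0. Qed.

Lemma shifted_cost_le x r rt xi mu eta : feasible x r xi mu -> T (xi N, rt) ->
  (forall y u, hx y <= 0 -> hu u <= 0 -> ell y u rt - ell y u r <= eta) ->
  V (xi N) rt - V (xi N) r <= eta ->
  ocp_cost ell V N rt (fun i => ext_state xi rt (1 + i)) (fun i => ext_input xi mu rt (1 + i))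
    <= ocp_cost ell V N r xi mu - ell x (mu 0%N) r + N%:R * eta.
Proof.
move=> fe TN dell dV; have [xi0 [dyn _]] := fe.
have XN1 : ext_state xi rt N.+1 = f (xi N) (kappaT (xi N) rt).
  by rewrite ext_state_succ // ext_state_le.
have UN : ext_input xi mu rt N = kappaT (xi N) rt by rewrite /ext_input ltnn ext_state_le.
have stage_le : \sum_(i < n) ell (ext_state xi rt (1 + i)) (ext_input xi mu rt (1 + i)) rt
    <= \sum_(i < n) ell (xi (bump 0 i)) (mu (bump 0 i)) r + n%:R * eta.
  have -> : n%:R * eta = \sum_(i < n) eta by rewrite sumr_const card_ord mulr_natl.
  rewrite -big_split; apply: ler_sum => i _; have iN : (i.+1 < N)%N by rewrite ltnS.
  rewrite /bump leq0n !add1n /ext_input iN (ext_state_le xi rt (ltnW iN)) [leRHS]/=.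
  have [_ [hxi hui]] := dyn _ iN; have := dell _ _ hxi hui; lra.
rewrite /ocp_cost big_ord_recr big_ord_recl /= !add1n XN1 UN ext_state_le // xi0.
have := V_dec (x := xi N) TN; rewrite -[(n.+1%:R : R)]natr1 mulrDl mul1r; lra.
Qed.

Lemma value_decrease x r rt eta : Gam (x, r) -> T (xis x r N, rt) -> Re rt ->
  (forall y u, hx y <= 0 -> hu u <= 0 -> ell y u rt - ell y u r <= eta) ->
  V (xis x r N) rt - V (xis x r N) r <= eta ->
  J (xis x r 1%N) rt <= J x r - gamma `|x - xbar r| + N%:R * eta.
Proof.
move=> Gx TN Rrt dell dV; have [fe _] := minimizer Gx.
have [G1 fe1] := ext_suffix_feasible 1 fe TN Rrt.
rewrite [ext_state _ _ 1]ext_state_le // in G1 fe1.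
apply: le_trans ((minimizer G1).2 _ _ fe1) _.
apply: le_trans (shifted_cost_le fe TN dell dV) _.
have [xi0 [dyn _]] := fe; have [_ [_ hu0]] := dyn 0%N isT.
by have := ell_lb Gx hu0; lra.
Qed.

Lemma value_lb x r : Gam (x, r) -> gamma `|x - xbar r| <= J x r.
Proof.
move=> Gx; have [fe _] := minimizer Gx; have [xi0 [dyn TN]] := fe; have [_ [Rr _]] := Gx.
rewrite /ocp_cost big_ord_recl /= xi0; set S := \sum_(i < n) _.
have S0 : 0 <= S.
  by apply: sumr_ge0 => i _; exact: feasible_stage_ge0 fe Rr (ltn_ord (lift ord0 i)).
have lb := ell_lb Gx (dyn 0%N isT).2.2.
by have := V_ge0 TN; lra.
Qed.

Lemma value_ge0 x r : Gam (x, r) -> 0 <= J x r.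
Proof. by move=> Gx; apply: le_trans (value_lb Gx); exact: Kinf_ge0. Qed.

Lemma minimizer_lipschitz : exists2 L : R, 0 < L & forall x1 r1 x2 r2,
  Gam (x1, r1) -> Gam (x2, r2) ->
  (forall i, (i <= N)%N -> `|xis x1 r1 i - xis x2 r2 i| <= L * (`|x1 - x2| + `|r1 - r2|)) /\
  (forall i, (i < N)%N -> `|mus x1 r1 i - mus x2 r2 i| <= L * (`|x1 - x2| + `|r1 - r2|)).
Proof.
have [L lip] := minimizer_lip; exists (`|L| + 1); first by rewrite ltr_pwDr.
move=> x1 r1 x2 r2 G1 G2; have := lip _ _ _ _ G1 G2.
have : L * (`|x1 - x2| + `|r1 - r2|) <= (`|L| + 1) * (`|x1 - x2| + `|r1 - r2|).
  by rewrite ler_wpM2r ?addr_ge0 // (le_trans (ler_norm L)) // lerDl.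
have Sx0 : 0 <= \sum_(i < N.+1) `|xis x1 r1 i - xis x2 r2 i| by exact: sumr_ge0.
have Su0 : 0 <= \sum_(i < N) `|mus x1 r1 i - mus x2 r2 i| by exact: sumr_ge0.
move=> Lbound sum_le; split=> i iN.
- have := @ler_sum_term _ _ (fun j : 'I_N.+1 => `|xis x1 r1 j - xis x2 r2 j|)
    (Ordinal (iN : (i < N.+1)%N)) (fun _ => normr_ge0 _); rewrite /=; lra.
- have := @ler_sum_term _ _ (fun j : 'I_N => `|mus x1 r1 j - mus x2 r2 j|) (Ordinal iN)
    (fun _ => normr_ge0 _); rewrite /=; lra.
Qed.

Lemma equilibrium_feasible r : Re r -> feasible (xbar r) r (fun => xbar r) (fun => ubar r).
Proof.
move=> Rr; have Sr := Re_sub Rr.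
split=> //; split; last exact: interior_subset (T_int Rr).
by move=> i _; split; [exact: xbar_fixed | split; [exact: xbar_adm | exact: ubar_adm]].
Qed.

Lemma Gamma_equilibrium r : Re r -> Gam (xbar r, r).
Proof.
move=> Rr; split; first exact/xbar_adm/Re_sub.
by split=> //; do 2 eexists; exact: equilibrium_feasible.
Qed.

Lemma value_equilibrium r : Re r -> J (xbar r) r = 0.
Proof.
move=> Rr; have Gr := Gamma_equilibrium Rr.
apply/le_anti; rewrite value_ge0 // andbT.
apply: le_trans ((minimizer Gr).2 _ _ (equilibrium_feasible Rr)) _.
by rewrite /ocp_cost V_eq0 // big1 ?addr0 // => i _; exact: ell_eq0.
Qed.

Lemma minimizer_equilibrium r i : Re r -> (i <= N)%N -> xis (xbar r) r i = xbar r.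
Proof.
move=> Rr iN; have Gr := Gamma_equilibrium Rr.
have [fe _] := minimizer Gr; have [_ [dyn TN]] := fe.
set xi := xis (xbar r) r in fe dyn TN *; set mu := mus (xbar r) r in fe dyn *.
have J0 : V (xi N) r + \sum_(j < N) ell (xi j) (mu j) r = 0 := value_equilibrium Rr.
have stage0 (j : 'I_N) : true -> 0 <= ell (xi j) (mu j) r.
  by move=> _; exact: feasible_stage_ge0 fe Rr _.
have V0 := V_ge0 TN; have S0 : 0 <= \sum_(j < N) ell (xi j) (mu j) r := sumr_ge0 _ stage0.
have [u hu0 ell_le0] : exists2 u, hu u <= 0 & ell (xi i) u r <= 0.
  case: (ltnP i N) => [iN' | Ni].
  - exists (mu i); first exact: (dyn i iN').2.2.
    by rewrite (psumr_eq0P stage0 _ (i := Ordinal iN')) //; lra.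
  - have -> : i = N by apply/eqP; rewrite eqn_leq iN Ni.
    have [T1 [_ hk]] := T_inv TN; exists (kappaT (xi N) r) => //.
    by have := V_dec TN; have := V_ge0 T1; lra.
apply/eqP; rewrite -subr_eq0 -normr_eq0; apply/eqP/(Kinf_eq0 gammaK) => //.
exact: le_trans (ell_lb (feasible_state_Gamma fe Rr iN) hu0) ell_le0.
Qed.

Lemma minimizer_dist_equilibrium : exists2 L : R, 0 < L & forall x r i,
  Re r -> Gam (x, r) -> (i <= N)%N -> `|xis x r i - xbar r| <= L * `|x - xbar r|.
Proof.
have [L L0 lip] := minimizer_lipschitz; exists L => // x r i Rr Gx iN.
have [/(_ i iN) + _] := lip _ _ _ _ Gx (Gamma_equilibrium Rr).
by rewrite minimizer_equilibrium // subrr normr0 addr0.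
Qed.

Lemma value_small_near_equilibrium r e : Re r -> 0 < e ->
  exists2 d : R, 0 < d & forall x, Gam (x, r) -> `|x - xbar r| < d -> J x r < e.
Proof.
move=> Rr e0; have Gr := Gamma_equilibrium Rr.
have [L L0 lip] := minimizer_lipschitz.
pose eta := e / N.+1%:R; have eta0 : 0 < eta by rewrite divr_gt0.
have [dl dl0 ell_near] := ell_uc eta0; have [dv dv0 V_near] := V_uc eta0.
exists (Num.min dl dv / L); first by rewrite divr_gt0 // lt_min dl0 dv0.
move=> x Gx; rewrite ltr_pdivlMr // mulrC lt_min => /andP [xl xv].
have [lipx lipu] := lip _ _ _ _ Gx Gr; rewrite subrr normr0 addr0 in lipx lipu.
have [[_ [dyn TN]] _] := minimizer Gx; have [[_ [dynb TNb]] _] := minimizer Gr.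
have stage_near (i : 'I_N) : true ->
    ell (xis x r i) (mus x r i) r - ell (xis (xbar r) r i) (mus (xbar r) r i) r <= eta.
  move=> _; have [_ [hxi hui]] := dyn i (ltn_ord i); have [_ [hxb hub]] := dynb i (ltn_ord i).
  apply/ltW/ltr_normlW/ell_near; rewrite ?subrr ?normr0 //.
  - exact: le_lt_trans (lipx i (ltnW (ltn_ord i))) xl.
  - exact: le_lt_trans (lipu i (ltn_ord i)) xl.
have V_small : V (xis x r N) r - V (xis (xbar r) r N) r < eta.
  apply/ltr_normlW/V_near; rewrite ?subrr ?normr0 //.
  exact: le_lt_trans (lipx N (leqnn N)) xv.
have sum_near : \sum_(i < N) ell (xis x r i) (mus x r i) r
    - \sum_(i < N) ell (xis (xbar r) r i) (mus (xbar r) r i) r <= N%:R * eta.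
  have -> : N%:R * eta = \sum_(i < N) eta by rewrite sumr_const card_ord mulr_natl.
  by rewrite -sumrB; exact: ler_sum.
have e_eq : e = N%:R * eta + eta.
  by rewrite -{2}[eta]mul1r -mulrDl natr1 mulrC /eta divfK ?pnatr_eq0.
by have := value_equilibrium Rr; rewrite /ocp_cost; lra.
Qed.

Section PathGovernor.
Variables (p : R -> 'rV[R]_nr) (g : 'rV[R]_nx -> R) (r : 'rV[R]_nr).
Hypothesis xbar_cont : {within Rset, continuous xbar}.
Hypothesis p_cont : {within [set s : R | 0 <= s <= 1], continuous p}.
Hypothesis p_Re : forall s, 0 <= s <= 1 -> Re (p s).
Hypothesis p1 : p 1 = r.
Hypothesis governor_max : forall xi, (exists s, 0 <= s <= 1 /\ T (xi, p s)) ->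
  0 <= g xi <= 1 /\ T (xi, p (g xi)) /\
  forall s, 0 <= s <= 1 -> T (xi, p s) -> s <= g xi.

Local Notation F := (cl_step f xis mus N p g).

Definition Gamma_path : set ('rV[R]_nx * R) := [set z | 0 <= z.2 <= 1 /\ Gam (z.1, p z.2)].

Lemma target_Re : Re r.
Proof. by rewrite -p1; apply: p_Re; rewrite lexx ler01. Qed.

Lemma Gamma_path_target x : Gam (x, r) -> Gamma_path (x, 1).
Proof. by move=> Gx; split; rewrite /= ?lexx ?ler01 ?p1. Qed.

Lemma path_near sg eta : 0 <= sg <= 1 -> 0 < eta -> exists2 th : R, 0 < th &
  forall s, 0 <= s <= 1 -> `|s - sg| < th ->
    `|p s - p sg| < eta /\ `|xbar (p s) - xbar (p sg)| < eta.
Proof.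
move=> sg01 eta0; have Rsg := Re_sub (p_Re sg01).
have [dx dx0 xbar_near] := within_continuous_ball xbar_cont Rsg eta0.
have min0 : 0 < Num.min eta dx by rewrite lt_min eta0 dx0.
have [th th0 p_near] := within_continuous_ball p_cont sg01 min0.
exists th => // s s01; rewrite distrC => /(p_near _ s01); rewrite lt_min => /andP [ps pd].
by rewrite distrC ps distrC xbar_near //; exact/Re_sub/p_Re.
Qed.

Lemma reference_variation_small ss eta : 0 <= ss <= 1 -> 0 < eta -> exists2 th : R, 0 < th &
  forall s s', 0 <= s <= 1 -> 0 <= s' <= 1 -> `|s - ss| < th -> `|s' - ss| < th ->
  (forall y u, hx y <= 0 -> hu u <= 0 -> ell y u (p s') - ell y u (p s) <= eta) /\
  (forall y, T (y, p s) -> T (y, p s') -> V y (p s') - V y (p s) <= eta).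
Proof.
move=> ss01 eta0; have [dl dl0 ell_near] := ell_uc eta0; have [dv dv0 V_near] := V_uc eta0.
have min0 : 0 < Num.min dl dv / 2 by rewrite divr_gt0 // lt_min dl0 dv0.
have [th th0 p_near] := path_near ss01 min0.
exists th => // s s' s01 s'01 sth s'th.
have [ps _] := p_near s s01 sth; have [ps' _] := p_near s' s'01 s'th.
have : `|p s' - p s| < Num.min dl dv.
  by have := ler_distD (p ss) (p s') (p s); rewrite (distrC (p ss)); lra.
rewrite lt_min => /andP [dpl dpv]; split=> [y u hy hu0 | y Ty Ty'].
- apply/ltW/ltr_normlW/ell_near; rewrite ?subrr ?normr0 //;
    by split=> //; split=> //; exact: p_Re.
- by apply/ltW/ltr_normlW/V_near; rewrite ?subrr ?normr0.
Qed.

Lemma cl_step_state z : Gamma_path z -> (F z).1 = xis z.1 (p z.2) 1%N.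
Proof. by case=> _ Gz; have [[xi0 [dyn _]] _] := minimizer Gz; rewrite /= (dyn 0%N isT).1 xi0. Qed.

Lemma cl_step_governor z : Gamma_path z ->
  [/\ 0 <= (F z).2 <= 1, T (xis z.1 (p z.2) N, p (F z).2) &
      forall s, 0 <= s <= 1 -> T (xis z.1 (p z.2) N, p s) -> s <= (F z).2].
Proof.
case=> z01 Gz; have [[_ [_ TN]] _] := minimizer Gz.
by have [? [? ?]] := governor_max (ex_intro _ z.2 (conj z01 TN)).
Qed.

Lemma cl_step_monotone z : Gamma_path z -> z.2 <= (F z).2.
Proof.
move=> Gz; have [_ _ gmax] := cl_step_governor Gz; case: Gz => z01 Gz.
by have [[_ [_ TN]] _] := minimizer Gz; exact: gmax.
Qed.

Lemma Gamma_path_invariant z : Gamma_path z -> Gamma_path (F z).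
Proof.
move=> Gz; have [s01 Ts _] := cl_step_governor Gz.
by split=> //; rewrite cl_step_state //; case: Gz => _ Gz; exact: Gamma_shift Gz Ts (p_Re s01).
Qed.

Lemma cl_step_value z eta : Gamma_path z ->
  (forall y u, hx y <= 0 -> hu u <= 0 -> ell y u (p (F z).2) - ell y u (p z.2) <= eta) ->
  (forall y, T (y, p z.2) -> T (y, p (F z).2) -> V y (p (F z).2) - V y (p z.2) <= eta) ->
  J (F z).1 (p (F z).2) <= J z.1 (p z.2) - gamma `|z.1 - xbar (p z.2)| + N%:R * eta.
Proof.
move=> Gz dell dV; have [s01 Ts _] := cl_step_governor Gz.
rewrite cl_step_state //; case: Gz => _ Gz; have [[_ [_ TN]] _] := minimizer Gz.
exact: value_decrease Gz Ts (p_Re s01) dell (dV _ TN Ts).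
Qed.


Lemma iter_Gamma_path z k : Gamma_path z -> Gamma_path (iter k F z).
Proof. by move=> Gz; elim: k => //= k; exact: Gamma_path_invariant. Qed.

Lemma iter_governor_homo z : Gamma_path z ->
  {homo (fun k => (iter k F z).2) : i j / (i <= j)%N >-> i <= j}.
Proof.
move=> Gz; apply: homo_leq => [//|? ? ?|k]; first exact: le_trans.
exact/cl_step_monotone/iter_Gamma_path.
Qed.

Lemma governor_dist_target z k : Gamma_path z -> `|(iter k F z).2 - 1| <= `|z.2 - 1|.
Proof.
move=> Gz; have [/andP [_ sk1] _] := iter_Gamma_path k Gz.
have [/andP [_ s1] _] := Gz; have := iter_governor_homo Gz (leq0n k).
by rewrite /= (distrC _ 1) (distrC z.2) !ger0_norm ?subr_ge0 //; lra.
Qed.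

Lemma governor_stays_target z k0 k : Gamma_path z -> (iter k0 F z).2 = 1 ->
  (k0 <= k)%N -> (iter k F z).2 = 1.
Proof.
move=> Gz sk0 k0k; have [/andP [_ sk1] _] := iter_Gamma_path k Gz.
by apply/le_anti; rewrite sk1 -{1}sk0 iter_governor_homo.
Qed.

Lemma Gamma_iter_target z k0 k : Gamma_path z -> (iter k0 F z).2 = 1 -> (k0 <= k)%N ->
  Gam ((iter k F z).1, r).
Proof.
move=> Gz sk0 k0k; have [_] := iter_Gamma_path k Gz.
by rewrite (governor_stays_target Gz sk0 k0k) p1.
Qed.

Lemma cl_step_target x : Gam (x, r) -> (F (x, 1)).2 = 1.
Proof.
move=> Gx; have G1 := Gamma_path_target Gx.
have [/andP [_ le1] _ _] := cl_step_governor G1.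
by apply/le_anti; rewrite le1 (cl_step_monotone G1).
Qed.

Lemma cl_step_equilibrium : F (xbar r, 1) = (xbar r, 1).
Proof.
have Gr := Gamma_equilibrium target_Re.
rewrite [LHS]surjective_pairing (cl_step_target Gr) (cl_step_state (Gamma_path_target Gr)).
by rewrite /= p1 (minimizer_equilibrium (i := 1) target_Re).
Qed.

Lemma value_decrease_target x : Gam (x, r) -> J (F (x, 1)).1 r <= J x r - gamma `|x - xbar r|.
Proof.
move=> Gx; have := cl_step_value (eta := 0) (Gamma_path_target Gx).
rewrite cl_step_target // p1 mulr0 addr0; apply=> [y u _ _ | y _ _]; by rewrite subrr.
Qed.

Lemma value_iter_decrease z k0 k : Gamma_path z -> (iter k0 F z).2 = 1 -> (k0 <= k)%N ->
  J (iter k.+1 F z).1 r <= J (iter k F z).1 r - gamma `|(iter k F z).1 - xbar r|.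
Proof.
move=> Gz sk0 k0k; have := Gamma_iter_target Gz sk0 k0k.
have := governor_stays_target Gz sk0 k0k; rewrite iterS.
by case: (iter k F z) => x s /= ->; exact: value_decrease_target.
Qed.

Lemma value_iter_nonincreasing z k0 j k : Gamma_path z -> (iter k0 F z).2 = 1 ->
  (k0 <= j)%N -> (j <= k)%N -> J (iter k F z).1 r <= J (iter j F z).1 r.
Proof.
move=> Gz sk0 k0j /subnKC <-; elim: (k - j)%N => [|d IH]; first by rewrite addn0.
rewrite addnS; apply: le_trans IH.
have := value_iter_decrease Gz sk0 (leq_trans k0j (leq_addr d j)).
by have := Kinf_ge0 gammaK (normr_ge0 ((iter (j + d) F z).1 - xbar r)); lra.
Qed.

Lemma state_converges z k0 : Gamma_path z -> (iter k0 F z).2 = 1 ->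
  (fun k => (iter k F z).1) @ \oo --> xbar r.
Proof.
move=> Gz sk0; apply/cvgrPdist_lt => e e0.
have [d d0 J_small] := value_small_near_equilibrium target_Re (Kinf_gt0 gammaK e0).
have [j k0j xj] : exists2 j, (k0 <= j)%N & `|(iter j F z).1 - xbar r| < d.
  apply: contrapT => far.
  apply: (@no_uniform_descent _ (fun k => J (iter (k0 + k) F z).1 r) 0 (gamma d)).
  - exact: Kinf_gt0.
  - by move=> k; exact/value_ge0/(Gamma_iter_target Gz sk0)/leq_addr.
  move=> k _; rewrite addnS.
  have x_far : d <= `|(iter (k0 + k) F z).1 - xbar r|.
    by rewrite leNgt; apply/negP => xk; apply: far; exists (k0 + k)%N; rewrite ?leq_addr.
  have := value_iter_decrease Gz sk0 (leq_addr k k0).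
  by have := Kinf_le gammaK (ltW d0) x_far; lra.
exists j => // k /= jk; rewrite distrC; apply: (Kinf_ltr gammaK (ltW e0)).
apply: le_lt_trans (value_lb (Gamma_iter_target Gz sk0 (leq_trans k0j jk))) _.
apply: le_lt_trans (value_iter_nonincreasing Gz sk0 k0j jk) _.
exact: J_small (Gamma_iter_target Gz sk0 k0j) xj.
Qed.

Lemma governor_progress ss : 0 <= ss <= 1 -> exists2 c : R, 0 < c & exists2 th : R, 0 < th &
  forall z, Gamma_path z -> `|z.2 - ss| < th -> `|z.1 - xbar (p z.2)| < c ->
    Num.min 1 (ss + th / 2) <= (F z).2.
Proof.
move=> ss01; have [rho rho0 T_ball] := interior_prod_ball (T_int (p_Re ss01)).
have [L L0 lip] := minimizer_dist_equilibrium.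
have rho20 : 0 < rho / 2 by rewrite divr_gt0.
have [th th0 p_near] := path_near ss01 rho20.
exists (rho / 2 / L); first by rewrite divr_gt0.
exists th => // z Gz sth; rewrite ltr_pdivlMr // => xc.
have [_ _ gmax] := cl_step_governor Gz; case: Gz => s01 Gx.
set s' := Num.min 1 _; have /andP [ss0 ss1] := ss01.
have ss_s' : ss <= s' by rewrite le_min ss1 lerDl divr_ge0 ?ltW.
have s'_le : s' <= ss + th / 2 by rewrite ge_min lexx orbT.
have s'01 : 0 <= s' <= 1 by rewrite (le_trans ss0 ss_s') ge_min lexx.
have s'_near : `|s' - ss| < th by rewrite ger0_norm ?subr_ge0 //; lra.
(* the terminal state of the optimal plan lies in the ball of T around (xbar (p ss), p ss) *)
apply: gmax => //; apply: T_ball; last by have [+ _] := p_near s' s'01 s'_near; lra.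
have [_ xbar_near] := p_near z.2 s01 sth.
have := lip z.1 (p z.2) N (p_Re s01) Gx (leqnn N).
by have := ler_distD (xbar (p z.2)) (xis z.1 (p z.2) N) (xbar (p ss)); lra.
Qed.

Lemma governor_reaches_target z : Gamma_path z -> exists k, (iter k F z).2 = 1.
Proof.
move=> Gz; apply: contrapT => never.
have below k : (iter k F z).2 < 1.
  have [/andP [_ sk1] _] := iter_Gamma_path k Gz.
  by rewrite lt_neqAle sk1 andbT; apply/eqP => sk; apply: never; exists k.
pose S := range (fun k => (iter k F z).2).
have S_ub : ubound S 1 by move=> _ [k _ <-]; exact/ltW.
have S0 : S !=set0 by exists z.2, 0%N.
have S_bdd : has_ubound S by exists 1.
have S_sup : has_sup S by [].
have le_ss k : (iter k F z).2 <= sup S by apply: (ub_le_sup S_bdd); exists k.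
have ss01 : 0 <= sup S <= 1.
  by rewrite ge_sup // (le_trans _ (le_ss 0%N)) //; case: Gz => /andP [].
have [c c0 [th1 th10 progress]] := governor_progress ss01.
pose eta := gamma c / 2 / N%:R.
have eta0 : 0 < eta by rewrite !divr_gt0 // Kinf_gt0.
have [th2 th20 variation] := reference_variation_small ss01 eta0.
have th0 : 0 < Num.min th1 th2 by rewrite lt_min th10 th20.
have [_ [K _ <-] sK] := sup_adherent th0 S_sup.
have near_ss k : (K <= k)%N -> `|(iter k F z).2 - sup S| < Num.min th1 th2.
  move=> Kk; rewrite distrC ger0_norm ?subr_ge0 //.
  by have := iter_governor_homo Gz Kk; rewrite /=; lra.
have far k : (K <= k)%N -> c <= `|(iter k F z).1 - xbar (p (iter k F z).2)|.
  move=> Kk; rewrite leNgt; apply/negP => close.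
  have := near_ss k Kk; rewrite lt_min => /andP [near1 _].
  have := progress _ (iter_Gamma_path k Gz) near1 close.
  rewrite -iterS ge_min => /orP []; have := below k.+1; have := le_ss k.+1; lra.
apply: (@no_uniform_descent _ (fun k => J (iter k F z).1 (p (iter k F z).2)) K (gamma c / 2)).
- by rewrite divr_gt0 // Kinf_gt0.
- by move=> k; have [_] := iter_Gamma_path k Gz; exact: value_ge0.
move=> k Kk; have Gk := iter_Gamma_path k Gz.
have := near_ss k Kk; have := near_ss k.+1 (leqW Kk).
rewrite !lt_min => /andP [_ nk1] /andP [_ nk].
have [dell dV] := variation _ _ Gk.1 (iter_Gamma_path k.+1 Gz).1 nk nk1.
have := cl_step_value Gk dell dV; have := Kinf_le gammaK (ltW c0) (far k Kk).
have : N%:R * eta = gamma c / 2 by rewrite /eta mulrC divfK ?pnatr_eq0.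
by rewrite /=; lra.
Qed.

Lemma minimizer_near_target w : 0 < w -> exists2 d : R, 0 < d & forall z, Gamma_path z ->
  `|z.1 - xbar r| < d -> `|z.2 - 1| < d ->
  forall i, (i <= N)%N -> `|xis z.1 (p z.2) i - xbar r| < w.
Proof.
move=> w0; have [L L0 lip] := minimizer_dist_equilibrium.
have den0 : 0 < 2 * L + 1 by lra.
pose dl := w / (2 * L + 1); have dl0 : 0 < dl by rewrite divr_gt0.
have w_eq : w = (2 * L + 1) * dl by rewrite /dl mulrC divfK // gt_eqF.
have one01 : 0 <= (1 : R) <= 1 by rewrite lexx ler01.
have [th th0 p_near] := path_near one01 dl0.
exists (Num.min dl th); first by rewrite lt_min dl0 th0.
move=> z [s01 Gx]; rewrite !lt_min => /andP [xdl _] /andP [_ sth] i iN.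
have [_] := p_near z.2 s01 sth; rewrite p1 => xbar_near.
have x_near : `|z.1 - xbar (p z.2)| < 2 * dl.
  by have := ler_distD (xbar r) z.1 (xbar (p z.2)); rewrite (distrC (xbar r)); lra.
have := lip z.1 (p z.2) i (p_Re s01) Gx iN; rewrite -(ltr_pM2l L0) in x_near.
by have := ler_distD (xbar (p z.2)) (xis z.1 (p z.2) i) (xbar r); lra.
Qed.

Lemma cl_stable e : 0 < e -> exists2 d : R, 0 < d & forall z, Gamma_path z ->
  `|z.1 - xbar r| < d -> `|z.2 - 1| < d ->
  forall k, `|(iter k F z).1 - xbar r| < e /\ `|(iter k F z).2 - 1| < e.
Proof.
move=> e0; have [d1 d10 J_small] := value_small_near_equilibrium target_Re (Kinf_gt0 gammaK e0).
have [rho rho0 T_ball] := interior_prod_ball (T_int target_Re).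
have w0 : 0 < Num.min d1 rho by rewrite lt_min d10 rho0.
have [d2 d20 traj_near] := minimizer_near_target w0.
exists (Num.min e d2); first by rewrite lt_min e0 d20.
move=> z Gz; rewrite !lt_min => /andP [xe xd2] /andP [se sd2] k.
split; last exact: le_lt_trans (governor_dist_target k Gz) se.
case: k => [//|k].
have near_i i : (i <= N)%N -> `|xis z.1 (p z.2) i - xbar r| < d1 /\
    `|xis z.1 (p z.2) i - xbar r| < rho.
  by move=> iN; apply/andP; rewrite -lt_min; exact: traj_near.
have s1 : (iter 1 F z).2 = 1.
  have [/andP [_ le1] _ gmax] := cl_step_governor Gz.
  apply/le_anti; rewrite le1 gmax ?ler01 ?lexx // p1.
  by apply: T_ball; [exact: (near_i N (leqnn N)).2 | rewrite subrr normr0].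
apply: (Kinf_ltr gammaK (ltW e0)).
apply: le_lt_trans (value_lb (Gamma_iter_target Gz s1 (ltn0Sn k))) _.
apply: le_lt_trans (value_iter_nonincreasing Gz s1 (leqnn 1) (ltn0Sn k)) _.
apply: J_small; first exact: Gamma_iter_target Gz s1 (leqnn 1).
by rewrite [iter 1 F z]/= cl_step_state //; exact: (near_i 1%N isT).1.
Qed.

Theorem pathfg_asympt_stable : asympt_stable_ROA F (xbar r) 1 Gamma_path.
Proof.
split; first exact: cl_step_equilibrium.
split=> [e e0 | z Gz]; first by have [d d0 stable] := cl_stable e0; exists d.
have [k0 sk0] := governor_reaches_target Gz; split; first exact: state_converges Gz sk0.
apply/cvgrPdist_lt => e e0; exists k0 => // k /= k0k.
by rewrite (governor_stays_target Gz sk0 k0k) subrr normr0.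
Qed.

End PathGovernor.

End MPCValueFunction.

Theorem theorem2 (R : realType) (nx nu nr : nat)
  (f : 'rV[R]_nx -> 'rV[R]_nu -> 'rV[R]_nx)
  (hx : 'rV[R]_nx -> R) (hu : 'rV[R]_nu -> R)
  (Rset : set 'rV[R]_nr)
  (xbar : 'rV[R]_nr -> 'rV[R]_nx) (ubar : 'rV[R]_nr -> 'rV[R]_nu)
  (eps : R) (N : nat)
  (ell : 'rV[R]_nx -> 'rV[R]_nu -> 'rV[R]_nr -> R)
  (T : set ('rV[R]_nx * 'rV[R]_nr))
  (V : 'rV[R]_nx -> 'rV[R]_nr -> R)
  (kappaT : 'rV[R]_nx -> 'rV[R]_nr -> 'rV[R]_nu)
  (gamma : R -> R)
  (xis : 'rV[R]_nx -> 'rV[R]_nr -> nat -> 'rV[R]_nx)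
  (mus : 'rV[R]_nx -> 'rV[R]_nr -> nat -> 'rV[R]_nu)
  (planner : 'rV[R]_nx -> 'rV[R]_nr -> R -> 'rV[R]_nr)
  (g : 'rV[R]_nx -> R)
  (r : 'rV[R]_nr) (x0 : 'rV[R]_nx)
  (* (A1) *)
  (Hf : loc_lipschitz2 f)
  (Hhx : continuous hx) (Hhu : continuous hu)
  (Hxbar : {within Rset, continuous xbar})
  (Hubar : {within Rset, continuous ubar})
  (HxbarX : forall r', Rset r' -> hx (xbar r') <= 0)
  (HubarU : forall r', Rset r' -> hu (ubar r') <= 0)
  (Heq : forall r', Rset r' -> xbar r' = f (xbar r') (ubar r'))
  (Heps : 0 < eps)
  (* MPC data *)
  (HN : (0 < N)%N)
  (Hell0 : forall x u r', hx x <= 0 -> hu u <= 0 ->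
     Reps Rset xbar ubar hx hu eps r' -> 0 <= ell x u r')
  (HT : forall z, T z -> hx z.1 <= 0 /\ Rset z.2)
  (* zeta^* : the minimizer, as a function on Gamma *)
  (Hzeta : forall x r',
     Gamma f hx hu T (Reps Rset xbar ubar hx hu eps) N (x, r') ->
     ocp_feasible f hx hu T N x r' (xis x r') (mus x r') /\
     forall xi mu, ocp_feasible f hx hu T N x r' xi mu ->
       ocp_cost ell V N r' (xis x r') (mus x r') <= ocp_cost ell V N r' xi mu)
  (* (A2)(a) *)
  (Hell_uc : unif_cont3 ell (fun x u r' => hx x <= 0 /\ hu u <= 0 /\
                               Reps Rset xbar ubar hx hu eps r'))
  (Hell_eq : forall r', Reps Rset xbar ubar hx hu eps r' ->
     ell (xbar r') (ubar r') r' = 0)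
  (Hgamma : Kinf gamma)
  (Hell_lb : forall x r' u,
     Gamma f hx hu T (Reps Rset xbar ubar hx hu eps) N (x, r') -> hu u <= 0 ->
     gamma `|x - xbar r'| <= ell x u r')
  (* (A2)(b) *)
  (HV_uc : unif_cont2 V T)
  (HV_eq : forall r', Reps Rset xbar ubar hx hu eps r' -> V (xbar r') r' = 0)
  (HV0 : forall x r', T (x, r') -> 0 <= V x r')
  (HV_dec : forall x r', T (x, r') ->
     V (f x (kappaT x r')) r' - V x r' <= - ell x (kappaT x r') r')
  (* (A2)(c) *)
  (HT_inv : forall x r', T (x, r') ->
     T (f x (kappaT x r'), r') /\ hx x <= 0 /\ hu (kappaT x r') <= 0)
  (* (A2)(d) *)
  (HT_int : forall r', Reps Rset xbar ubar hx hu eps r' ->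
     interior T (xbar r', r'))
  (* (A2)(e) *)
  (Hzeta_lip : exists L : R, forall x1 r1 x2 r2,
     Gamma f hx hu T (Reps Rset xbar ubar hx hu eps) N (x1, r1) ->
     Gamma f hx hu T (Reps Rset xbar ubar hx hu eps) N (x2, r2) ->
     \sum_(i < N.+1) `|xis x1 r1 i - xis x2 r2 i|
       + \sum_(i < N) `|mus x1 r1 i - mus x2 r2 i|
       <= L * (`|x1 - x2| + `|r1 - r2|))
  (* (A3) *)
  (Hplanner : forall x' r',
     Dset (Gamma f hx hu T (Reps Rset xbar ubar hx hu eps) N)
          (Reps Rset xbar ubar hx hu eps) (x', r') ->
     feasible_path (Gamma f hx hu T (Reps Rset xbar ubar hx hu eps) N)
          (Reps Rset xbar ubar hx hu eps) x' r' (planner x' r'))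
  (* r in R_eps and the path p = planner x0 r returned by the planner *)
  (Hr : Reps Rset xbar ubar hx hu eps r)
  (HD0 : Dset (Gamma f hx hu T (Reps Rset xbar ubar hx hu eps) N)
          (Reps Rset xbar ubar hx hu eps) (x0, r))
  (* g is the Path Feasibility Governor map g(xi) = max{s in [0,1] | (xi, p s) in T} *)
  (Hg : forall xi : 'rV[R]_nx,
     (exists s : R, 0 <= s <= 1 /\ T (xi, planner x0 r s)) ->
     (0 <= g xi <= 1 /\ T (xi, planner x0 r (g xi)) /\
      forall s : R, 0 <= s <= 1 -> T (xi, planner x0 r s) -> s <= g xi)) :
  asympt_stable_ROA
    (cl_step f xis mus N (planner x0 r) g) (xbar r) 1
    [set z | Dset (Gamma f hx hu T (Reps Rset xbar ubar hx hu eps) N)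
                  (Reps Rset xbar ubar hx hu eps) (z.1, r) /\
             0 <= z.2 <= 1 /\
             Gamma f hx hu T (Reps Rset xbar ubar hx hu eps) N
                   (z.1, planner x0 r z.2)].
Proof.
have [n eN] : exists n, N = n.+1 by exists N.-1; rewrite prednK.
subst N; have [p_cont [p_Re [_ p1]]] := Hplanner x0 r HD0.
have Re_sub : Reps Rset xbar ubar hx hu eps `<=` Rset by move=> ? [].
apply: asympt_stable_ROA_sub (pathfg_asympt_stable Re_sub Heq HxbarX HubarU Hell0 Hzeta
  Hell_uc Hell_eq Hgamma Hell_lb HV_uc HV_eq HV0 HV_dec HT_inv HT_int Hzeta_lip
  Hxbar p_cont p_Re p1 Hg).
by move=> z [_ Gz].
Qed.
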